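(* Let $a>b\geq c>d>0$ and let $p,q$ be real numbers with $p,q\notin\{0,-1\}$. If $ad-bc>0$, then $$\left(\frac{L_p(a,b)}{L_p(c,d)}\right)^p\geq \left(\frac{L_q(a,b)}{L_q(c,d)}\right)^q\left(\frac{I(a^{q+1},b^{q+1})}{I(c^{q+1},d^{q+1})}\right)^{\frac{p-q}{q+1}}.$$ If $ad-bc<0$, the reverse inequality holds. Equality holds if and only if $ad-bc=0$ or $p=q$.
   Context: For $u,v>0$: the identric mean is $I(u,v)=\frac{1}{e}\left(\frac{u^u}{v^v}\right)^{1/(u-v)}$ if $u\neq v$ and $I(u,u)=u$; for $p\neq 0,-1$ the $p$-logarithmic mean is $L_p(u,v)=\left(\frac{u^{p+1}-v^{p+1}}{(p+1)(u-v)}\right)^{1/p}$ if $u\neq v$ and $L_p(u,u)=u$. *)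

From Stdlib Require Export Reals.
Open Scope R_scope.

Definition identric (u v : R) : R :=
  if Req_dec_T u v then u
  else / exp 1 * Rpower (Rpower u u / Rpower v v) (/ (u - v)).

Definition plog (p u v : R) : R :=
  if Req_dec_T u v then u
  else Rpower ((Rpower u (p + 1) - Rpower v (p + 1)) / ((p + 1) * (u - v))) (/ p).

(* Put s = p+1, r = q+1, x = ln (a/b) and y = ln (c/d).  By homogeneity of the
   means, the logarithm of lhs/rhs is G(x) - G(y) for an explicit function
   G = log_gap s r of one variable, and x > y exactly when ad > bc.  Everything
   therefore reduces to: G is constant when s = r and strictly increasing on
   (0, +oo) otherwise.  The latter holds because x G'(x) is the gap between
   xcoth t = (t/2) coth (t/2) at t = sx and its tangent line at t = rx, and
   xcoth is even and strictly convex. *)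

From Coquelicot Require Import Coquelicot.
From Stdlib Require Import Reals Lra.
Open Scope R_scope.

Lemma lt_from_0_of_derive_pos (f f' : R -> R) :
  (forall t, is_derive f t (f' t)) -> (forall t, 0 < t -> 0 < f' t) ->
  forall t, 0 < t -> f 0 < f t.
Proof.
  intros Hf Hf' t Ht.
  destruct (MVT_cor2 f f' 0 t Ht) as [c [Hmvt Hc]].
  { intros c _. apply is_derive_Reals, Hf. }
  assert (0 < f' c * (t - 0)) by (apply Rmult_lt_0_compat; [apply Hf'|]; lra).
  lra.
Qed.

Lemma tangent_lt_of_derive_increasing (f f' : R -> R) (a : R) :
  (forall t, a < t -> is_derive f t (f' t)) ->
  (forall s t, a < s -> s < t -> f' s < f' t) ->
  forall x y, a < x -> a < y -> x <> y -> f y + (x - y) * f' y < f x.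
Proof.
  intros Hf Hf' x y Hx Hy Hxy.
  assert (Hd : forall u v, a < u -> forall c, u <= c <= v -> derivable_pt_lim f c (f' c)).
  { intros u v Hu c Hc. apply is_derive_Reals, Hf. lra. }
  destruct (Rlt_or_le x y) as [Hlt | Hle].
  - destruct (MVT_cor2 f f' x y Hlt (Hd x y Hx)) as [c [Hmvt Hc]].
    pose proof (Hf' c y ltac:(lra) ltac:(lra)). nra.
  - destruct (MVT_cor2 f f' y x ltac:(lra) (Hd y x Hy)) as [c [Hmvt Hc]].
    pose proof (Hf' y c ltac:(lra) ltac:(lra)). nra.
Qed.

Lemma exp_sub_one_lt_mul_exp t : t <> 0 -> exp t - 1 < t * exp t.
Proof.
  intros Ht. pose proof (exp_ineq1 (- t) ltac:(lra)) as H.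
  rewrite exp_Ropp in H. pose proof (exp_pos t).
  apply Rmult_lt_compat_r with (r := exp t) in H; [|lra].
  rewrite Rinv_l in H by lra. lra.
Qed.

Lemma two_mul_exp_sub_one_lt t : 0 < t -> 2 * (exp t - 1) < t * (exp t + 1).
Proof.
  intros Ht.
  refine (_ (lt_from_0_of_derive_pos (fun t => t * (exp t + 1) - 2 * (exp t - 1))
                                    (fun t => 1 - exp t + t * exp t) _ _ t Ht)).
  - rewrite exp_0. lra.
  - intros u. auto_derive; [easy | ring].
  - intros u Hu. pose proof (exp_sub_one_lt_mul_exp u ltac:(lra)). lra.
Qed.

Lemma one_add_two_mul_exp_lt t : 0 < t -> 1 + 2 * t * exp t < exp t * exp t.
Proof.
  intros Ht.
  refine (_ (lt_from_0_of_derive_pos (fun t => exp t * exp t - 2 * t * exp t)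
                                    (fun t => 2 * exp t * (exp t - 1 - t)) _ _ t Ht)).
  - rewrite exp_0. lra.
  - intros u. auto_derive; [easy | ring].
  - intros u Hu. pose proof (exp_ineq1 u ltac:(lra)). pose proof (exp_pos u). nra.
Qed.

(* [xcoth t = (t/2) coth (t/2)]; the value at 0 is a junk value. *)
Definition xcoth (t : R) : R := t * (exp t + 1) / (2 * (exp t - 1)).
Definition xcoth' (t : R) : R := (exp t * exp t - 1 - 2 * t * exp t) / (2 * (exp t - 1) ^ 2).

Lemma exp_sub_one_neq0 t : t <> 0 -> exp t - 1 <> 0.
Proof. intros Ht E. apply Ht, exp_inv. rewrite exp_0. lra. Qed.

Lemma is_derive_xcoth t : t <> 0 -> is_derive xcoth t (xcoth' t).
Proof.
  intros Ht. pose proof (exp_sub_one_neq0 t Ht).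
  unfold xcoth, xcoth'. auto_derive; [lra | field; lra].
Qed.

Lemma is_derive_xcoth' t : t <> 0 ->
  is_derive xcoth' t (exp t * (t * (exp t + 1) - 2 * (exp t - 1)) / (exp t - 1) ^ 3).
Proof.
  intros Ht. pose proof (exp_sub_one_neq0 t Ht).
  unfold xcoth'. auto_derive.
  - repeat apply Rmult_integral_contrapositive_currified; lra.
  - field; lra.
Qed.

Lemma xcoth_opp t : t <> 0 -> xcoth (- t) = xcoth t.
Proof.
  intros Ht. pose proof (exp_sub_one_neq0 t Ht). pose proof (exp_sub_one_neq0 (- t) ltac:(lra)).
  pose proof (exp_pos t). unfold xcoth in *. rewrite exp_Ropp in *. field. lra.
Qed.

Lemma xcoth'_opp t : t <> 0 -> xcoth' (- t) = - xcoth' t.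
Proof.
  intros Ht. pose proof (exp_sub_one_neq0 t Ht). pose proof (exp_sub_one_neq0 (- t) ltac:(lra)).
  pose proof (exp_pos t). unfold xcoth' in *. rewrite exp_Ropp in *. field. lra.
Qed.

Lemma xcoth'_pos t : 0 < t -> 0 < xcoth' t.
Proof.
  intros Ht. pose proof (exp_sub_one_neq0 t ltac:(lra)).
  pose proof (one_add_two_mul_exp_lt t Ht).
  apply Rdiv_lt_0_compat; [lra|]. apply Rmult_lt_0_compat; [lra|]. apply pow2_gt_0. easy.
Qed.

Lemma xcoth'_increasing s t : 0 < s -> s < t -> xcoth' s < xcoth' t.
Proof.
  intros Hs Hst.
  apply (incr_function xcoth' (Finite 0) p_infty
           (fun t => exp t * (t * (exp t + 1) - 2 * (exp t - 1)) / (exp t - 1) ^ 3));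
    simpl; try easy.
  - intros u Hu _. apply is_derive_xcoth'. lra.
  - intros u Hu _. pose proof (exp_ineq1 u ltac:(lra)). pose proof (exp_pos u).
    pose proof (two_mul_exp_sub_one_lt u Hu).
    apply Rdiv_lt_0_compat; [nra | repeat apply Rmult_lt_0_compat; lra].
Qed.

(* Strict convexity of [xcoth] across its removable singularity at 0, obtained
   from convexity on (0, +oo) and evenness. *)
Lemma xcoth_tangent_lt x y : x <> 0 -> y <> 0 -> x <> y ->
  xcoth y + (x - y) * xcoth' y < xcoth x.
Proof.
  assert (Hpos : forall x y, 0 < x -> 0 < y -> x <> y -> xcoth y + (x - y) * xcoth' y < xcoth x).
  { apply (tangent_lt_of_derive_increasing xcoth xcoth' 0).
    - intros t Ht. apply is_derive_xcoth. lra.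
    - exact xcoth'_increasing. }
  assert (Hy_pos : forall x y, x <> 0 -> 0 < y -> x <> y ->
                   xcoth y + (x - y) * xcoth' y < xcoth x).
  { intros u v Hu Hv Huv. destruct (Rlt_or_le 0 u) as [Hu' | Hu']; [now apply Hpos|].
    rewrite <- (xcoth_opp u Hu). pose proof (xcoth'_pos v Hv).
    destruct (Req_dec (- u) v) as [E | E].
    - rewrite E. nra.
    - pose proof (Hpos (- u) v ltac:(lra) Hv E). nra. }
  intros Hx Hy Hxy. destruct (Rlt_or_le 0 y) as [Hy' | Hy']; [now apply Hy_pos|].
  pose proof (Hy_pos (- x) (- y) ltac:(lra) ltac:(lra) ltac:(lra)) as H.
  rewrite xcoth_opp, xcoth_opp, xcoth'_opp in H by easy. lra.
Qed.

Definition expm1_div (s x : R) : R := (exp (s * x) - 1) / s.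

Definition log_gap (s r x : R) : R :=
  ln (expm1_div s x) - ln (expm1_div r x) - (s - r) * x * exp (r * x) / (exp (r * x) - 1).

Lemma expm1_div_pos s x : s <> 0 -> 0 < x -> 0 < expm1_div s x.
Proof.
  intros Hs Hx. unfold expm1_div.
  destruct (Rlt_or_le 0 s) as [Hs' | Hs'].
  - pose proof (exp_ineq1 (s * x) ltac:(nra)). apply Rdiv_lt_0_compat; nra.
  - assert (exp (s * x) < exp 0) by (apply exp_increasing; nra). rewrite exp_0 in *.
    replace ((exp (s * x) - 1) / s) with ((1 - exp (s * x)) / - s) by (field; lra).
    apply Rdiv_lt_0_compat; lra.
Qed.

Lemma is_derive_log_gap s r x : s <> 0 -> r <> 0 -> 0 < x ->
  is_derive (log_gap s r) x
    ((xcoth (s * x) - xcoth (r * x) - (s * x - r * x) * xcoth' (r * x)) / x).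
Proof.
  intros Hs Hr Hx.
  pose proof (expm1_div_pos s x Hs Hx). pose proof (expm1_div_pos r x Hr Hx).
  pose proof (exp_sub_one_neq0 (s * x) ltac:(nra)).
  pose proof (exp_sub_one_neq0 (r * x) ltac:(nra)).
  unfold log_gap, expm1_div, xcoth, xcoth' in *. auto_derive.
  - repeat split; lra.
  - field. repeat split; lra.
Qed.

Lemma log_gap_increasing s r x y : s <> 0 -> r <> 0 -> s <> r -> 0 < x -> x < y ->
  log_gap s r x < log_gap s r y.
Proof.
  intros Hs Hr Hsr Hx Hxy.
  apply (incr_function _ (Finite 0) p_infty _ (fun t Ht _ => is_derive_log_gap s r t Hs Hr Ht));
    simpl; try easy.
  intros t Ht _. apply Rdiv_lt_0_compat; [|easy].
  pose proof (xcoth_tangent_lt (s * t) (r * t)) as H.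
  enough (xcoth (r * t) + (s * t - r * t) * xcoth' (r * t) < xcoth (s * t)) by lra.
  apply H; intro E; [apply Hs | apply Hr | apply Hsr]; nra.
Qed.

Lemma log_gap_diag s x : log_gap s s x = 0.
Proof. unfold log_gap. rewrite Rminus_diag. unfold Rdiv. ring. Qed.

Lemma log_gap_le s r x y : s <> 0 -> r <> 0 -> 0 < x -> x <= y ->
  log_gap s r x <= log_gap s r y.
Proof.
  intros Hs Hr Hx Hxy. destruct (Req_dec s r) as [<- | Hsr].
  - rewrite !log_gap_diag. lra.
  - destruct (Req_dec x y) as [<- | Hne]; [lra|].
    left. apply log_gap_increasing; lra.
Qed.

Lemma log_gap_eq_iff s r x y : s <> 0 -> r <> 0 -> 0 < x -> 0 < y ->
  log_gap s r x = log_gap s r y <-> x = y \/ s = r.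
Proof.
  intros Hs Hr Hx Hy. split.
  - intros E. destruct (Req_dec s r) as [| Hsr]; [now right | left].
    destruct (Rtotal_order x y) as [H | [H | H]]; [| easy |];
      [pose proof (log_gap_increasing s r x y) | pose proof (log_gap_increasing s r y x)]; lra.
  - intros [<- | <-]; [easy | now rewrite !log_gap_diag].
Qed.

Lemma plog_pos p u v : u <> v -> 0 < plog p u v.
Proof. intros Huv. unfold plog. destruct (Req_dec_T u v); [easy | apply exp_pos]. Qed.

Lemma ln_plog p u v : p <> 0 -> u <> v ->
  p * ln (plog p u v) = ln ((Rpower u (p + 1) - Rpower v (p + 1)) / ((p + 1) * (u - v))).
Proof.
  intros Hp Huv. unfold plog. destruct (Req_dec_T u v); [easy|].
  rewrite ln_Rpower. field. easy.
Qed.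

Lemma identric_pos u v : 0 < u -> 0 < identric u v.
Proof.
  intros Hu. unfold identric. destruct (Req_dec_T u v); [easy|].
  apply Rmult_lt_0_compat; [apply Rinv_0_lt_compat, exp_pos | apply exp_pos].
Qed.

Lemma ln_identric u v : 0 < u -> 0 < v -> u <> v ->
  ln (identric u v) = -1 + (u * ln u - v * ln v) / (u - v).
Proof.
  intros Hu Hv Huv. unfold identric. destruct (Req_dec_T u v); [easy|].
  rewrite ln_mult by (apply Rinv_0_lt_compat, exp_pos || apply exp_pos).
  rewrite ln_Rinv, ln_exp, ln_Rpower, ln_div, !ln_Rpower by apply exp_pos.
  field. lra.
Qed.

Lemma ln_Rpower_diff_quotient a b s : 0 < b < a -> s <> 0 ->
  ln ((Rpower a s - Rpower b s) / (s * (a - b))) =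
  s * ln b + ln (expm1_div s (ln a - ln b)) - ln (a - b).
Proof.
  intros Hab Hs.
  assert (Hx : 0 < ln a - ln b) by (pose proof (ln_increasing b a); lra).
  pose proof (expm1_div_pos s _ Hs Hx).
  replace ((Rpower a s - Rpower b s) / (s * (a - b)))
    with (exp (s * ln b) * expm1_div s (ln a - ln b) / (a - b)).
  - rewrite ln_div, ln_mult, ln_exp;
      [ring | apply exp_pos | easy | apply Rmult_lt_0_compat; [apply exp_pos | easy] | lra].
  - unfold Rpower, expm1_div. replace (s * ln a) with (s * ln b + s * (ln a - ln b)) by ring.
    rewrite exp_plus. field. lra.
Qed.

Lemma ln_identric_Rpower a b r : 0 < b < a -> r <> 0 ->
  ln (identric (Rpower a r) (Rpower b r)) =
  -1 + r * ln b + r * (ln a - ln b) * exp (r * (ln a - ln b)) / (exp (r * (ln a - ln b)) - 1).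
Proof.
  intros Hab Hr.
  assert (Hx : 0 < ln a - ln b) by (pose proof (ln_increasing b a); lra).
  pose proof (exp_sub_one_neq0 (r * (ln a - ln b)) ltac:(nra)) as Hne.
  assert (Hab_r : Rpower a r <> Rpower b r).
  { intros E. apply exp_inv in E. apply Hr. nra. }
  assert (Ha : Rpower a r = exp (r * ln b) * exp (r * (ln a - ln b))).
  { unfold Rpower. rewrite <- exp_plus. f_equal. ring. }
  pose proof (exp_pos (r * ln b)).
  rewrite ln_identric, !ln_Rpower by (easy || apply exp_pos).
  rewrite Ha in *. unfold Rpower in *. field. split; [easy | lra].
Qed.

Lemma ln_means_log_gap a b p q : 0 < b < a ->
  p <> 0 -> p <> -1 -> q <> 0 -> q <> -1 ->
  p * ln (plog p a b) - q * ln (plog q a b)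
  - (p - q) / (q + 1) * ln (identric (Rpower a (q + 1)) (Rpower b (q + 1)))
  = log_gap (p + 1) (q + 1) (ln a - ln b) + (p - q) / (q + 1).
Proof.
  intros Hab Hp Hp1 Hq Hq1.
  assert (Hx : 0 < ln a - ln b) by (pose proof (ln_increasing b a); lra).
  pose proof (exp_sub_one_neq0 ((q + 1) * (ln a - ln b)) ltac:(nra)).
  rewrite !ln_plog, !ln_Rpower_diff_quotient, ln_identric_Rpower by lra.
  unfold log_gap. field. lra.
Qed.

Lemma Rpower_div_exp u v e : 0 < u -> 0 < v -> Rpower (u / v) e = exp (e * (ln u - ln v)).
Proof. intros Hu Hv. unfold Rpower. now rewrite ln_div. Qed.

Lemma means_ratio_log_gap a b c d p q : 0 < b < a -> 0 < d < c ->
  p <> 0 -> p <> -1 -> q <> 0 -> q <> -1 ->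
  Rpower (plog p a b / plog p c d) p =
  Rpower (plog q a b / plog q c d) q *
  Rpower (identric (Rpower a (q + 1)) (Rpower b (q + 1)) /
          identric (Rpower c (q + 1)) (Rpower d (q + 1))) ((p - q) / (q + 1)) *
  exp (log_gap (p + 1) (q + 1) (ln a - ln b) - log_gap (p + 1) (q + 1) (ln c - ln d)).
Proof.
  intros Hab Hcd Hp Hp1 Hq Hq1.
  pose proof (ln_means_log_gap a b p q Hab Hp Hp1 Hq Hq1).
  pose proof (ln_means_log_gap c d p q Hcd Hp Hp1 Hq Hq1).
  rewrite !Rpower_div_exp by (apply plog_pos || apply identric_pos, exp_pos; lra).
  rewrite <- !exp_plus. f_equal. lra.
Qed.

Lemma ln_sub_ln_sub_ln a b c d : 0 < a -> 0 < b -> 0 < c -> 0 < d ->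
  (ln a - ln b) - (ln c - ln d) = ln (a * d) - ln (b * c).
Proof. intros. rewrite !ln_mult by easy. ring. Qed.

Lemma cross_lt_iff_ln a b c d : 0 < a -> 0 < b -> 0 < c -> 0 < d ->
  b * c < a * d <-> ln c - ln d < ln a - ln b.
Proof.
  intros Ha Hb Hc Hd. pose proof (ln_sub_ln_sub_ln a b c d Ha Hb Hc Hd).
  split; intros H'.
  - pose proof (ln_increasing (b * c) (a * d) ltac:(nra) H'). lra.
  - apply ln_lt_inv; [nra | nra | lra].
Qed.

Lemma cross_eq_iff_ln a b c d : 0 < a -> 0 < b -> 0 < c -> 0 < d ->
  a * d = b * c <-> ln a - ln b = ln c - ln d.
Proof.
  intros Ha Hb Hc Hd. pose proof (ln_sub_ln_sub_ln a b c d Ha Hb Hc Hd).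
  split; intros H'.
  - rewrite H' in H. lra.
  - apply ln_inv; [nra | nra | lra].
Qed.

Lemma log_gap_ratio_compare s r a b c d : s <> 0 -> r <> 0 -> 0 < b < a -> 0 < d < c ->
  (b * c < a * d -> log_gap s r (ln c - ln d) <= log_gap s r (ln a - ln b)) /\
  (a * d < b * c -> log_gap s r (ln a - ln b) <= log_gap s r (ln c - ln d)) /\
  (log_gap s r (ln a - ln b) = log_gap s r (ln c - ln d) <-> a * d = b * c \/ s = r).
Proof.
  intros Hs Hr Hab Hcd.
  assert (Hx : 0 < ln a - ln b) by (pose proof (ln_increasing b a); lra).
  assert (Hy : 0 < ln c - ln d) by (pose proof (ln_increasing d c); lra).
  split; [|split].
  - intros H. apply log_gap_le; [easy | easy | easy |].
    apply Rlt_le, cross_lt_iff_ln; lra.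
  - intros H. apply log_gap_le; [easy | easy | easy |].
    apply Rlt_le, cross_lt_iff_ln; lra.
  - rewrite log_gap_eq_iff, cross_eq_iff_ln by lra. reflexivity.
Qed.

Lemma Rmult_exp_compare r e : 0 < r ->
  (0 <= e -> r <= r * exp e) /\ (e <= 0 -> r * exp e <= r) /\ (r * exp e = r <-> e = 0).
Proof.
  intros Hr. pose proof (exp_ineq1_le e). pose proof (exp_ineq1_le (- e)).
  pose proof (exp_pos e). rewrite exp_Ropp in *.
  assert (exp e * / exp e = 1) by (field; lra).
  split; [|split; [|split]]; intros He.
  - nra.
  - nra.
  - apply exp_inv. rewrite exp_0. nra.
  - rewrite He, exp_0. ring.
Qed.

Theorem theorem3p3 (a b c d p q : R) :
  a > b -> b >= c -> c > d -> d > 0 ->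
  p <> 0 -> p <> -1 -> q <> 0 -> q <> -1 ->
  let lhs := Rpower (plog p a b / plog p c d) p in
  let rhs := Rpower (plog q a b / plog q c d) q *
             Rpower (identric (Rpower a (q + 1)) (Rpower b (q + 1)) /
                     identric (Rpower c (q + 1)) (Rpower d (q + 1)))
                    ((p - q) / (q + 1)) in
  (a * d - b * c > 0 -> lhs >= rhs) /\
  (a * d - b * c < 0 -> lhs <= rhs) /\
  (lhs = rhs <-> (a * d - b * c = 0 \/ p = q)).
Proof.
  intros Hab Hbc Hcd Hd Hp Hp1 Hq Hq1 lhs rhs.
  set (G := log_gap (p + 1) (q + 1)).
  set (delta := G (ln a - ln b) - G (ln c - ln d)).
  assert (Hlhs : lhs = rhs * exp delta) by (apply means_ratio_log_gap; lra).
  assert (Hrhs : 0 < rhs) by (apply Rmult_lt_0_compat; apply exp_pos).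
  destruct (log_gap_ratio_compare (p + 1) (q + 1) a b c d) as [Hgt [Hlt Heq]]; try lra.
  destruct (Rmult_exp_compare rhs delta Hrhs) as [Hge [Hle Hexp]].
  fold G in Hgt, Hlt, Heq.
  rewrite Hlhs. split; [|split].
  - intros H. apply Rle_ge, Hge. pose proof (Hgt ltac:(lra)). unfold delta. lra.
  - intros H. apply Hle. pose proof (Hlt ltac:(lra)). unfold delta. lra.
  - rewrite Hexp. unfold delta. split; intros H.
    + destruct (proj1 Heq ltac:(lra)); [left | right]; lra.
    + enough (G (ln a - ln b) = G (ln c - ln d)) by lra.
      apply Heq. destruct H; [left | right]; lra.
Qed.
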